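(* Let $n\ge 3$, $k\ge 1$ and $p\in\{0,1,2\}$. Then \[ \gamma_{\rm S}(C_n,C_{3k+p})\in \begin{cases} \{kn\}, & p=0,\\ \{kn,\;kn+1\}, & p=1,\\ \{kn+\lfloor n/2\rfloor,\; kn+\lfloor n/2\rfloor+1\}, & p=2. \end{cases} \] Moreover, if $n\equiv 0 \pmod 4$, then $\gamma_{\rm S}(C_n,C_{3k+1})=kn$ and $\gamma_{\rm S}(C_n,C_{3k+2})=kn+\lfloor n/2\rfloor$.
   Context: $C_m$ denotes the cycle on $m$ vertices; $\gamma$ denotes the domination number. For graphs $G,H$ and a function $f\colon V(G)\to V(H)$, the Sierpiński product $G\otimes_f H$ is the graph with vertex set $V(G)\times V(H)$ and edges of two types: (type 1) $(g,h)(g,h')$ for every $g\in V(G)$ and every edge $hh'\in E(H)$; (type 2) $(g,f(g'))(g',f(g))$ for every edge $gg'\in E(G)$. The Sierpiński domination number is $\gamma_{\rm S}(G,H)=\min_{f}\gamma(G\otimes_f H)$ over all functions $f\colon V(G)\to V(H)$. *)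

From mathcomp Require Import all_boot all_order.
Set Implicit Arguments. Unset Strict Implicit. Unset Printing Implicit Defensive.

(* The cycle C_m on vertex set 'I_m (meaningful for m >= 3):
   i ~ j iff j = i+1 mod m or i = j+1 mod m. *)
Definition cycle_rel (m : nat) : rel 'I_m :=
  fun i j => (j == (i.+1 %% m) :> nat) || (i == (j.+1 %% m) :> nat).

Definition dominating (T : finType) (e : rel T) (D : {set T}) : bool :=
  [forall v : T, (v \in D) || [exists u in D, e u v]].

(* Domination number: least cardinality of a dominating set
   (the whole vertex set dominates, so #|T| is a valid start value). *)
Definition domination_number (T : finType) (e : rel T) : nat :=
  \big[minn/#|T|]_(D : {set T} | dominating e D) #|D|.

Definition sierpinski_rel (G H : finType) (eG : rel G) (eH : rel H)
    (f : G -> H) : rel (G * H) :=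
  fun x y =>
    ((x.1 == y.1) && eH x.2 y.2)
    || [&& eG x.1 y.1, x.2 == f y.1 & y.2 == f x.1].

Definition sierpinski_domination (G H : finType) (eG : rel G) (eH : rel H)
    : nat :=
  \big[minn/#|{: G * H}|]_(f : {ffun G -> H})
     domination_number (sierpinski_rel eG eH f).

Definition gammaS_cycles (n m : nat) : nat :=
  sierpinski_domination (@cycle_rel n) (@cycle_rel m).

(* Write D_g for the fiber of a dominating set D over the copy g of C_m.
   Inside its copy, D_g dominates at most 3 |D_g| vertices, and each of the two
   neighbouring copies dominates at most one further vertex through its type-2
   edge, so m <= 3 |D_g| + 2 and |D| >= kn as soon as m >= 3k.  For m = 3k + 2
   two consecutive copies cannot both profit from each other, which gives
   |D_g| + |D_(g+1)| >= 2k + 1.  The matching constructions use fibers that are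
   progressions of step 3 in C_m, shifted along C_n so that the one or two
   vertices a fiber misses are dominated from a neighbouring copy; f is periodic
   modulo 4, which is where the condition 4 | n comes from. *)

From mathcomp Require Import all_boot all_order zify zmodp.
Set Implicit Arguments. Unset Strict Implicit. Unset Printing Implicit Defensive.

Lemma geq_bigmin_cond (I : finType) (P : pred I) (F : I -> nat) x0 i0 :
  P i0 -> \big[minn/x0]_(i | P i) F i <= F i0.
Proof.
rewrite unlock; elim: (index_enum I) (mem_index_enum i0) => //= i r IHr.
rewrite in_cons => /orP[/eqP <- -> | /IHr le_r Pi0]; first exact: geq_minl.
by case: (P i) => /=; rewrite ?geq_min le_r ?orbT.
Qed.

Lemma domination_number_le (T : finType) (e : rel T) (D : {set T}) :
  dominating e D -> domination_number e <= #|D|.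
Proof. exact: geq_bigmin_cond. Qed.

Lemma domination_number_ge (T : finType) (e : rel T) L :
  L <= #|T| -> (forall D, dominating e D -> L <= #|D|) -> L <= domination_number e.
Proof.
move=> LT LD; apply: (big_ind (fun x => L <= x)) => // x y Lx Ly.
by rewrite leq_min Lx Ly.
Qed.

Definition closed_nbh (T : finType) (e : rel T) (X : {set T}) : {set T} :=
  [set v | (v \in X) || [exists u in X, e u v]].

Section SierpinskiDomination.

Variables (G H : finType) (eG : rel G) (eH : rel H).

Lemma sierpinski_domination_le (f : {ffun G -> H}) (D : {set G * H}) :
  dominating (sierpinski_rel eG eH f) D -> sierpinski_domination eG eH <= #|D|.
Proof.
move=> domD; apply: leq_trans (domination_number_le domD).
exact: (@geq_bigmin_cond _ xpredT (fun f => domination_number _)).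
Qed.

Lemma sierpinski_domination_ge L :
  L <= #|{: G * H}| ->
  (forall (f : {ffun G -> H}) D, dominating (sierpinski_rel eG eH f) D -> L <= #|D|) ->
  L <= sierpinski_domination eG eH.
Proof.
move=> LT LD; apply: (big_ind (fun x => L <= x)) => //.
  by move=> x y Lx Ly; rewrite leq_min Lx Ly.
by move=> f _; apply: domination_number_ge => //; apply: LD.
Qed.

Definition fiber (D : {set G * H}) (g : G) : {set H} := [set h | (g, h) \in D].

Definition fibered (S : G -> {set H}) : {set G * H} := [set x | x.2 \in S x.1].

Lemma fiber_fibered (S : G -> {set H}) g : fiber (fibered S) g = S g.
Proof. by apply/setP => h; rewrite !inE. Qed.

Lemma card_fibers (D : {set G * H}) : #|D| = \sum_g #|fiber D g|.
Proof.
rewrite -sum1_card big_mkcond /=.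
transitivity (\sum_(x : G * H) ((x.1, x.2) \in D : nat)).
  by apply: eq_bigr => -[g h].
rewrite -(pair_bigA _ (fun g h => ((g, h) \in D : nat))).
apply: eq_bigr => g _; rewrite -sum1_card [RHS]big_mkcond /=.
by apply: eq_bigr => h _; rewrite inE.
Qed.

Lemma card_fibered (S : G -> {set H}) : #|fibered S| = \sum_g #|S g|.
Proof. by rewrite card_fibers; apply: eq_bigr => g _; rewrite fiber_fibered. Qed.

Lemma dominating_fibersP (f : G -> H) (D : {set G * H}) :
  reflect (forall g h, h \in closed_nbh eH (fiber D g) \/
             exists2 g', eG g' g & h = f g' /\ f g \in fiber D g')
          (dominating (sierpinski_rel eG eH f) D).
Proof.
apply: (iffP forallP) => [domD g h | coverD [g h]].
  case/orP: (domD (g, h)) => [ghD | /existsP[[g' h'] /andP[D' /orP[]]]] /=.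
  - by left; rewrite !inE ghD.
  - case/andP=> /eqP<- e_h'h; left; rewrite !inE; apply/orP; right.
    by apply/existsP; exists h'; rewrite inE D'.
  case/and3P=> e_g'g /eqP def_h' /eqP ->; right; exists g' => //.
  by rewrite inE -def_h'.
case: (coverD g h) => [|[g' e_g'g [-> fgD]]].
  rewrite !inE; case/orP=> [-> // | /existsP[h' /andP[]]].
  rewrite inE => ghD e_h'h; apply/orP; right.
  by apply/existsP; exists (g, h'); rewrite ghD /sierpinski_rel /= eqxx e_h'h.
move: fgD; rewrite inE => fgD; apply/orP; right; apply/existsP; exists (g', f g).
by rewrite fgD /sierpinski_rel /= e_g'g !eqxx orbT.
Qed.

End SierpinskiDomination.

Section CycleNeighbourhoods.

Variable m : nat.
Implicit Types (x y : 'I_m) (X : {set 'I_m}).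

Lemma cycle_relE x y : cycle_rel x y = (y == ordS x) || (y == ord_pred x).
Proof.
rewrite /cycle_rel -(inj_eq val_inj) /=; congr (_ || _).
by rewrite -(inj_eq (@ordS_inj m)) ord_predK -(inj_eq val_inj) /= eq_sym.
Qed.

Lemma cycle_rel_sym x y : cycle_rel x y = cycle_rel y x.
Proof. exact: orbC. Qed.

Lemma card_closed_nbh_cycle X : #|closed_nbh (@cycle_rel m) X| <= 3 * #|X|.
Proof.
have sub_nbh :
    closed_nbh (@cycle_rel m) X \subset X :|: @ordS m @: X :|: @ord_pred m @: X.
  apply/subsetP=> y; rewrite !inE => /orP[-> // | /existsP[x /andP[xX]]].
  by rewrite cycle_relE => /orP[]/eqP->; rewrite imset_f ?orbT.
apply: leq_trans (subset_leq_card sub_nbh) _.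
apply: leq_trans (leq_card_setU _ _) _; rewrite mulSn mulSn mul1n addnA.
apply: leq_add; last exact: leq_imset_card.
apply: leq_trans (leq_card_setU _ _) _.
by rewrite leq_add2l leq_imset_card.
Qed.

End CycleNeighbourhoods.

Lemma val_ordS n (g : 'I_n) : ordS g = (if g.+1 < n then g.+1 else 0) :> nat.
Proof.
rewrite /=; case: ltnP => lt_g1_n; first by rewrite modn_small.
by rewrite (_ : g.+1 = n) ?modnn //; apply/eqP; rewrite eqn_leq lt_g1_n ltn_ord.
Qed.

Lemma val_ord_pred n (g : 'I_n) : ord_pred g = (if 0 < g then g.-1 else n.-1) :> nat.
Proof.
have lt_g_n := ltn_ord g; rewrite /=; case: ifP => g_gt0.
  by rewrite (_ : (g + n).-1 = g.-1 + n) ?modnDr ?modn_small //; lia.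
have g0 : nat_of_ord g = 0 by move/negbT: g_gt0; lia.
by rewrite g0 add0n modn_small //; lia.
Qed.

Section FiberLowerBounds.

Variables (n m : nat) (f : 'I_n -> 'I_m) (D : {set 'I_n * 'I_m}).

(* The type-2 edge from copy [g'] dominates [(g, f g')], a vertex outside [D]. *)
Definition dominated_from (g' g : 'I_n) : bool :=
  ((g', f g) \in D) && ((g, f g') \notin D).

Hypothesis domD : dominating (sierpinski_rel (@cycle_rel n) (@cycle_rel m) f) D.

Lemma fiber_card_lb g :
  m <= 3 * #|fiber D g| + dominated_from (ord_pred g) g + dominated_from (ordS g) g.
Proof.
pose B g' := if dominated_from g' g then [set f g'] else set0.
have cover : [set: 'I_m] \subset
    closed_nbh (@cycle_rel m) (fiber D g) :|: B (ord_pred g) :|: B (ordS g).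
  apply/subsetP=> h _.
  have [in_nbh | [g' e_g'g [-> ]]] := dominating_fibersP _ _ _ _ domD g h.
    by rewrite !in_setU in_nbh.
  rewrite inE => fgD.
  have [gfD | gfD] := boolP ((g, f g') \in D).
    by rewrite !in_setU !inE gfD.
  have B_f : f g' \in B g' by rewrite /B /dominated_from fgD gfD set11.
  by move: e_g'g; rewrite cycle_rel_sym cycle_relE => /orP[]/eqP<-; rewrite !inE B_f ?orbT.
have cardB g' : #|B g'| = dominated_from g' g.
  by rewrite /B; case: ifP; rewrite ?cards1 ?cards0.
rewrite -{1}[m]card_ord -cardsT; apply: leq_trans (subset_leq_card cover) _.
rewrite -!cardB; apply: leq_trans (leq_card_setU _ _) _; rewrite leq_add2r.
apply: leq_trans (leq_card_setU _ _) _.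
by rewrite leq_add2r card_closed_nbh_cycle.
Qed.

Lemma fiber_card_ge k g : 3 * k <= m -> k <= #|fiber D g|.
Proof.
have := fiber_card_lb g.
have := leq_b1 (dominated_from (ord_pred g) g); have := leq_b1 (dominated_from (ordS g) g).
lia.
Qed.

(* [dominated_from (ordS g) g] and [dominated_from g (ordS g)] exclude each
   other, so one of the two fibers satisfies [m <= 3 * #|fiber| + 1]. *)
Lemma fiber_pair_card_ge k g :
  m = 3 * k + 2 -> 2 * k + 1 <= #|fiber D g| + #|fiber D (ordS g)|.
Proof.
move=> def_m.
have lb_g := fiber_card_lb g; have lb_Sg := fiber_card_lb (ordS g).
rewrite ordSK in lb_Sg.
have excl : ~~ (dominated_from (ordS g) g && dominated_from g (ordS g)).
  by rewrite /dominated_from; do 2 case: (_ \in D).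
move: lb_g lb_Sg excl.
have := leq_b1 (dominated_from (ord_pred g) g).
have := leq_b1 (dominated_from (ordS (ordS g)) (ordS g)).
case: (dominated_from (ordS g) g); case: (dominated_from g (ordS g)) => /=; lia.
Qed.

End FiberLowerBounds.

Lemma gammaS_cycles_ge_mul n m k : 3 * k <= m -> k * n <= gammaS_cycles n m.
Proof.
move=> le_3k_m; apply: sierpinski_domination_ge; first by rewrite card_prod !card_ord; nia.
move=> f D domD; rewrite card_fibers.
have -> : k * n = \sum_(g < n) k by rewrite sum_nat_const card_ord mulnC.
by apply: leq_sum => g _; exact: (fiber_card_ge domD g le_3k_m).
Qed.

Lemma gammaS_cycles_ge_3k2 n k : k * n + n./2 <= gammaS_cycles n (3 * k + 2).
Proof.
apply: sierpinski_domination_ge; first by rewrite card_prod !card_ord; nia.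
move=> f D domD.
suff : n * (2 * k + 1) <= #|D| + #|D| by lia.
rewrite card_fibers {2}(reindex_inj (@ordS_inj n)) -big_split /=.
have -> : n * (2 * k + 1) = \sum_(g < n) (2 * k + 1) by rewrite sum_nat_const card_ord.
by apply: leq_sum => g _; exact: (fiber_pair_card_ge domD g (erefl _)).
Qed.

Lemma sum_ord_indicator n j (P : pred nat) :
  \sum_(g < n) ((g == j :> nat) && P g : nat) = (j < n) && P j.
Proof.
elim: n => [|n IHn]; first by rewrite big_ord0.
rewrite big_ord_recr /= IHn.
case: (ltngtP j n) => [lt_jn | lt_nj | <-] /=; last by rewrite ltnSn.
  by rewrite ltnW ?addn0.
by rewrite ltnNge lt_nj.
Qed.

Lemma sum_not_odd n : \sum_(g < n) (~~ odd g : nat) = uphalf n.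
Proof. by elim: n => [|n IHn]; rewrite ?big_ord0 // big_ord_recr /= IHn; lia. Qed.

Section Progressions.

Variable m : nat.

Definition progression3 (c r : nat) : {set 'I_m.+1} :=
  [set inZp (c + 3 * j) | j : 'I_r].

Lemma card_progression3 c r : #|progression3 c r| <= r.
Proof. by apply: leq_trans (leq_imset_card _ _) _; rewrite card_ord. Qed.

Lemma mem_progression3 c r j a :
  j < r -> a = c + 3 * j %[mod m.+1] -> inZp a \in progression3 c r.
Proof. by move=> lt_j_r eq_a; apply/imsetP; exists (Ordinal lt_j_r) => //; apply: val_inj. Qed.

(* The element [c + 3 * (i %/ 3)] of the progression is [h + 1], [h] or
   [h - 1] according to [i %% 3]. *)
Lemma progression3_closed_nbh c r i (h : 'I_m.+1) :
  i < 3 * r -> c + i = h.+1 %[mod m.+1] ->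
  h \in closed_nbh (@cycle_rel m.+1) (progression3 c r).
Proof.
move=> lt_i_3r eq_i; set j := i %/ 3.
have uP : inZp (c + 3 * j) \in progression3 c r by apply: mem_progression3 (_ : j < r) _; lia.
rewrite inE; apply/orP.
have [i0 | [i1 | i2]] : i %% 3 = 0 \/ i %% 3 = 1 \/ i %% 3 = 2 by lia.
- right; apply/existsP; exists (inZp (c + 3 * j)); rewrite uP /cycle_rel /=.
  by rewrite (_ : c + 3 * j = c + i) ?eq_i ?eqxx ?orbT //; lia.
- left; rewrite (_ : h = inZp (c + 3 * j)) //; apply/val_inj => /=.
  rewrite -(modn_small (ltn_ord h)); apply/eqP; rewrite -(eqn_modDr 1) !addn1.
  by rewrite (_ : (c + 3 * j).+1 = c + i) ?eq_i //; lia.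
- right; apply/existsP; exists (inZp (c + 3 * j)); rewrite uP /cycle_rel /=.
  apply/orP; left; apply/eqP; rewrite -[LHS](modn_small (ltn_ord h)).
  rewrite -[((c + 3 * j) %% m.+1).+1]addn1 modnDml addn1.
  apply/eqP; rewrite -(eqn_modDr 1) !addn1.
  by rewrite (_ : (c + 3 * j).+2 = c + i) ?eq_i //; lia.
Qed.

Lemma progression3_closed_nbh_full r (h : 'I_m.+1) :
  m < 3 * r -> h \in closed_nbh (@cycle_rel m.+1) (progression3 0 r).
Proof.
move=> lt_m_3r; have [lt_h1_3r | ge_h1_3r] := ltnP h.+1 (3 * r).
  exact: (progression3_closed_nbh (i := h.+1)).
apply: (progression3_closed_nbh (i := 0)); first lia.
by rewrite (_ : h.+1 = m.+1) ?modnn ?mod0n //; have := ltn_ord h; lia.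
Qed.

End Progressions.

Lemma gammaS_cycles_le_mul n m k : m < 3 * k -> gammaS_cycles n m.+1 <= k * n.
Proof.
move=> lt_m_3k; pose S (g : 'I_n) := progression3 m 0 k.
have domS : dominating (sierpinski_rel (@cycle_rel n) (@cycle_rel m.+1) [ffun=> ord0])
                       (fibered S).
  by apply/dominating_fibersP => g h; left; rewrite fiber_fibered progression3_closed_nbh_full.
apply: leq_trans (sierpinski_domination_le domS) _; rewrite card_fibered.
have -> : k * n = \sum_(g < n) k by rewrite sum_nat_const card_ord mulnC.
by apply: leq_sum => g _; apply: card_progression3.
Qed.

Section Construction3k1.

Variables (n k : nat).
Hypothesis k_gt0 : 0 < k.

(* The
   fiber over [g] misses only [f (g - 1)], which copy [g - 1] dominates because
   its own fiber contains [f g].  When 4 does not divide n the pattern breaks at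
   the wrap-around, and copy 0 gets a full fiber of size k + 1 instead. *)
Definition f3k1 : {ffun 'I_n -> 'I_(3 * k).+1} :=
  [ffun g : 'I_n => inZp (2 * (2 <= g %% 4))].

Definition fibers3k1 (g : 'I_n) : {set 'I_(3 * k).+1} :=
  if ~~ (4 %| n) && (g == 0 :> nat) then progression3 (3 * k) 0 k.+1
  else progression3 (3 * k) (2 * (2 <= ord_pred g %% 4) + 2) k.

Lemma ord_pred2_mod4 (g : 'I_n) :
  (2 <= g) || (4 %| n) -> (2 <= ord_pred (ord_pred g) %% 4) = ~~ (2 <= g %% 4).
Proof.
have lt_g_n := ltn_ord g; rewrite (val_ord_pred (ord_pred g)) val_ord_pred.
by case: (ltnP 0 g) => ?; [case: (ltnP 0 g.-1) | case: (ltnP 0 n.-1)] => ?; lia.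
Qed.

Lemma progression3_3k1_closed_nbh (b : bool) (h : 'I_(3 * k).+1) :
  h != 2 * b :> nat ->
  h \in closed_nbh (@cycle_rel _) (progression3 (3 * k) (2 * b + 2) k).
Proof.
have lt_h := ltn_ord h; case: b => /= h_neq.
  have [le_h1 | ge_h3] := leqP h 1.
    apply: (progression3_closed_nbh (i := h + 3 * k - 2)); first lia.
    by rewrite (_ : _ + _ = h.+1 + (3 * k).+1) ?modnDr //; lia.
  by apply: (progression3_closed_nbh (i := h - 3)); [lia | congr (_ %% _); lia].
by apply: (progression3_closed_nbh (i := h.-1)); [lia | congr (_ %% _); lia].
Qed.

Lemma mem_progression3_3k1 (b : bool) :
  inZp (2 * b) \in progression3 (3 * k) (2 * ~~ b + 2) k.
Proof.
case: b => /=; first exact: (mem_progression3 (j := 0)).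
apply: (mem_progression3 (j := k.-1)); first lia.
by rewrite (_ : _ + _ = (3 * k).+1) ?modnn ?mod0n //; lia.
Qed.

Lemma dominating_fibers3k1 :
  dominating (sierpinski_rel (@cycle_rel n) (@cycle_rel _) f3k1) (fibered fibers3k1).
Proof.
apply/dominating_fibersP => g h; rewrite fiber_fibered /fibers3k1.
case: ifP => [_ | not_full]; first by left; apply: progression3_closed_nbh_full; lia.
set b := 2 <= ord_pred g %% 4.
have [h_eq | h_neq] := eqVneq (h : nat) (2 * b); last first.
  by left; apply: progression3_3k1_closed_nbh.
right; exists (ord_pred g); first by rewrite cycle_relE ord_predK eqxx.
split.
  by apply: val_inj; rewrite ffunE /= h_eq modn_small //; case: (b); lia.
rewrite fiber_fibered /fibers3k1 ffunE.
case: ifP => [/andP[n4 /eqP pg0] | not_full_pred].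
  apply: (mem_progression3 (j := 0)) => //.
  have := val_ord_pred g; rewrite pg0; move: not_full; rewrite n4 /=.
  by case: (ltnP 0 g) => g_pos /negbT/eqP g_neq0 g1;
    rewrite (_ : 1 < g %% 4 = false) //; lia.
rewrite ord_pred2_mod4; first exact: mem_progression3_3k1.
by move: not_full not_full_pred (val_ord_pred g); case: (ltnP 0 g) => g_pos; lia.
Qed.

Lemma card_fibers3k1 : #|fibered fibers3k1| <= k * n + ~~ (4 %| n).
Proof.
have card_le g : #|fibers3k1 g| <= k + ((g == 0 :> nat) && ~~ (4 %| n)).
  rewrite /fibers3k1 andbC; case: ifP => _; first by rewrite addn1 card_progression3.
  by rewrite addn0 card_progression3.
rewrite card_fibered.
apply: (@leq_trans (\sum_(g < n) (k + ((g == 0 :> nat) && ~~ (4 %| n))))).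
  by apply: leq_sum => g _; apply: card_le.
rewrite big_split /= sum_nat_const card_ord mulnC leq_add2l.
by rewrite (sum_ord_indicator n 0 (fun _ => ~~ (4 %| n))) /=; case: (0 < n).
Qed.

End Construction3k1.

Lemma gammaS_cycles_le_3k1 n k :
  0 < k -> gammaS_cycles n (3 * k).+1 <= k * n + ~~ (4 %| n).
Proof.
move=> k_gt0; apply: leq_trans (card_fibers3k1 n k).
exact: sierpinski_domination_le (dominating_fibers3k1 n k_gt0).
Qed.

Section Construction3k2.

Variables (n k : nat).

(* An odd vertex gets the
   thin fiber {3, 6, ..., 3k}, which misses 0 and 1; these are dominated from
   its two even neighbours, where f takes both values and the fibers are full.
   Only the odd vertex n - 1 for n = 2 (mod 4) must keep a full fiber. *)
Definition f3k2 : {ffun 'I_n -> 'I_(3 * k + 1).+1} :=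
  [ffun g : 'I_n => inZp (g %% 4 == 2)].

Definition thin3k2 (g : 'I_n) : bool := odd g && ((g.+1 < n) || (4 %| n)).

Definition fibers3k2 (g : 'I_n) : {set 'I_(3 * k + 1).+1} :=
  if thin3k2 g then progression3 (3 * k + 1) 3 k else progression3 (3 * k + 1) 0 k.+1.

Lemma thin3k2_neighbours (g : 'I_n) : thin3k2 g ->
  [/\ ~~ thin3k2 (ord_pred g), ~~ thin3k2 (ordS g)
    & (ord_pred g %% 4 == 2) != (ordS g %% 4 == 2)].
Proof.
rewrite /thin3k2 val_ord_pred val_ordS; have := ltn_ord g.
by case: (ltnP 0 g); case: (ltnP g.+1 n) => ? ? ? ?; split; lia.
Qed.

Lemma dominating_fibers3k2 :
  dominating (sierpinski_rel (@cycle_rel n) (@cycle_rel _) f3k2) (fibered fibers3k2).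
Proof.
apply/dominating_fibersP => g h; rewrite fiber_fibered /fibers3k2.
case: ifP => [thin_g | _]; last by left; apply: progression3_closed_nbh_full; lia.
have lt_h := ltn_ord h; have [h_ge2 | h_le1] := leqP 2 h.
  by left; apply: (progression3_closed_nbh (i := h - 2)); [lia | congr (_ %% _); lia].
have [thick_pred thick_S f_neq] := thin3k2_neighbours thin_g.
have [g' [e_g'g h_eq thick_g']] : exists g', [/\ cycle_rel g' g,
    h = (g' %% 4 == 2) :> nat & ~~ thin3k2 g'].
  have [h_pred | h_S] := eqVneq (h : nat) (ord_pred g %% 4 == 2).
    by exists (ord_pred g); rewrite cycle_relE ord_predK eqxx.
  exists (ordS g); split => //; first by rewrite cycle_relE ordSK eqxx orbT.
  by move: f_neq h_S; case: (_ == 2); case: (_ == 2); lia.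
right; exists g' => //; split.
  apply: val_inj; rewrite ffunE /= h_eq (@modn_small (_ == 2)) //.
  by case: (_ == 2); lia.
rewrite fiber_fibered /fibers3k2 (negbTE thick_g') ffunE.
apply: (mem_progression3 (j := 0)) => //.
by rewrite /thin3k2 in thin_g; rewrite (_ : g %% 4 == 2 = false) //; lia.
Qed.

Lemma card_fibers3k2 : #|fibered fibers3k2| <= k * n + n./2 + ~~ (4 %| n).
Proof.
have card_le g : #|fibers3k2 g| <= k + ~~ thin3k2 g.
  by rewrite /fibers3k2; case: ifP => _; rewrite ?addn0 ?addn1 card_progression3.
have thick_le (g : 'I_n) :
    ~~ thin3k2 g <= ~~ odd g + ((g == n.-1 :> nat) && (odd g && ~~ (4 %| n))).
  by rewrite /thin3k2; have := ltn_ord g; lia.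
rewrite card_fibered -addnA.
apply: (@leq_trans (\sum_(g < n) (k + ~~ thin3k2 g))).
  by apply: leq_sum => g _; apply: card_le.
rewrite big_split /= sum_nat_const card_ord mulnC leq_add2l.
apply: (@leq_trans (\sum_(g < n) (~~ odd g + ((g == n.-1 :> nat) && (odd g && ~~ (4 %| n)))))).
  by apply: leq_sum => g _; apply: thick_le.
rewrite big_split /= sum_not_odd (sum_ord_indicator n n.-1 (fun g => odd g && ~~ (4 %| n))) /=.
lia.
Qed.

End Construction3k2.

Lemma gammaS_cycles_le_3k2 n k :
  gammaS_cycles n (3 * k + 1).+1 <= k * n + n./2 + ~~ (4 %| n).
Proof.
apply: leq_trans (card_fibers3k2 n k).
exact: sierpinski_domination_le (dominating_fibers3k2 n k).
Qed.

Theorem theorem3p1 (n k : nat) (hn : 3 <= n) (hk : 1 <= k) :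
  [/\ gammaS_cycles n (3 * k) = k * n,
      gammaS_cycles n (3 * k + 1) \in [:: k * n; k * n + 1],
      gammaS_cycles n (3 * k + 2) \in [:: k * n + n./2; k * n + n./2 + 1]
    & (n %% 4 = 0 ->
        gammaS_cycles n (3 * k + 1) = k * n /\
        gammaS_cycles n (3 * k + 2) = k * n + n./2)].
Proof.
have lb0 := gammaS_cycles_ge_mul n (leqnn (3 * k)).
have ub0 : gammaS_cycles n (3 * k) <= k * n.
  by rewrite (_ : 3 * k = (3 * k).-1.+1) ?gammaS_cycles_le_mul //; lia.
have lb1 : k * n <= gammaS_cycles n (3 * k + 1) by apply: gammaS_cycles_ge_mul; lia.
have ub1 : gammaS_cycles n (3 * k + 1) <= k * n + ~~ (4 %| n).
  by rewrite addn1 gammaS_cycles_le_3k1.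
have lb2 := gammaS_cycles_ge_3k2 n k.
have ub2 : gammaS_cycles n (3 * k + 2) <= k * n + n./2 + ~~ (4 %| n).
  by rewrite (_ : 3 * k + 2 = (3 * k + 1).+1) ?gammaS_cycles_le_3k2 //; lia.
split; rewrite ?inE; lia.
Qed.
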